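(* Let $G=(\{f_i\},\{c_i\},\{X_i\},W)$ be a networked public goods game (as in the context). Suppose there exist a symmetric matrix $W^0=(w^0_{ij})$ and constants $L_i\ge 0$, $C_i>0$ such that (1) $W^0$ is positive definite with minimal eigenvalue $\sigma_0>0$, and $w^0_{ii}=1$ for all $i$; (2) $c_i'$ is $L_i$-Lipschitz for every $i$; (3) $f_i$ is $C_i$-concave for every $i$; (4) $\sigma_0>\sigma_{\max}(\Sigma)$, where $\Sigma=(\sigma_{ij})$ with $\sigma_{ii}=0$ and, for $i\ne j$, $\sigma_{ij}=\frac{2L_i|w_{ij}|}{C_i}+|w^0_{ij}-w_{ij}|$, and $\sigma_{\max}$ denotes the maximum singular value. Then $G$ has a unique (pure) Nash equilibrium.
   Context: There are $n$ players; player $i$ chooses effort $x_i\in X_i=[\underline{x}_i,\bar{x}_i]$, $X=\prod_iX_i$. $W=(w_{ij})$ is a real $n\times n$ matrix with $w_{ii}=1$. The gain of $i$ is $k_i=\sum_jw_{ij}x_j\in K_i=[\underline{k}_i,\bar{k}_i]$ (min and max over $X$). $f_i:K_i\to\mathbb{R}$ is twice differentiable, concave and strictly increasing; $c_i:X_i\to\mathbb{R}$ is twice differentiable, convex and strictly increasing; utility $u_i(\mathbf{x})=f_i(k_i)-c_i(x_i)$. A Nash equilibrium is $\mathbf{x}\in X$ with $u_i(x_i',\mathbf{x}_{-i})\le u_i(\mathbf{x})$ for all $i$, $x_i'\in X_i$. A differentiable $g$ on an interval is $C$-concave if $g(y)\le g(x)+g'(x)(y-x)-\frac C2(y-x)^2$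 for all $x,y$. *)

From HB Require Import structures.
From mathcomp Require Import all_boot all_order all_algebra.
From mathcomp Require Import all_classical all_reals all_analysis.
Set Implicit Arguments. Unset Strict Implicit. Unset Printing Implicit Defensive.
Import Order.TTheory GRing.Theory Num.Theory.
Import numFieldNormedType.Exports.
Local Open Scope classical_set_scope.
Local Open Scope ring_scope.

Section NPG.
Variable R : realType.

(* [dg] is the derivative of [g] on the set [A], derivatives being taken
   within [A] (one-sided at endpoints of an interval). *)
Definition deriv_on (A : set R) (g dg : R -> R) : Prop :=
  forall x, A x ->
    (fun y => (g y - g x) / (y - x)) @ within (A `\ x) (nbhs x) --> dg x.

Definition concave_on (A : set R) (g : R -> R) : Prop :=
  forall x y t, A x -> A y -> 0 <= t -> t <= 1 ->
    t * g x + (1 - t) * g y <= g (t * x + (1 - t) * y).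

Definition convex_on (A : set R) (g : R -> R) : Prop :=
  forall x y t, A x -> A y -> 0 <= t -> t <= 1 ->
    g (t * x + (1 - t) * y) <= t * g x + (1 - t) * g y.

Definition strictly_increasing_on (A : set R) (g : R -> R) : Prop :=
  forall x y, A x -> A y -> x < y -> g x < g y.

Definition C_concave_on (C : R) (A : set R) (g dg : R -> R) : Prop :=
  forall x y, A x -> A y ->
    g y <= g x + dg x * (y - x) - C / 2 * (y - x) ^+ 2.

Definition Lipschitz_const_on (L : R) (A : set R) (g : R -> R) : Prop :=
  forall x y, A x -> A y -> `|g x - g y| <= L * `|x - y|.

Variable n : nat.

Definition Xi (lo hi : 'I_n -> R) (i : 'I_n) : set R :=
  [set t | lo i <= t /\ t <= hi i].

Definition inX (lo hi : 'I_n -> R) (x : 'I_n -> R) : Prop :=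
  forall i, Xi lo hi i (x i).

Definition gain (W : 'M[R]_n) (i : 'I_n) (x : 'I_n -> R) : R :=
  \sum_(j < n) W i j * x j.

Definition Ki (W : 'M[R]_n) (lo hi : 'I_n -> R) (i : 'I_n) : set R :=
  [set k | exists x, inX lo hi x /\ k = gain W i x].

Definition upd (x : 'I_n -> R) (i : 'I_n) (y : R) : 'I_n -> R :=
  fun j => if j == i then y else x j.

Definition utility (W : 'M[R]_n) (f c : 'I_n -> R -> R) (i : 'I_n)
  (x : 'I_n -> R) : R := f i (gain W i x) - c i (x i).

Definition nash_eq (W : 'M[R]_n) (lo hi : 'I_n -> R) (f c : 'I_n -> R -> R)
  (x : 'I_n -> R) : Prop :=
  inX lo hi x /\
  forall i y, Xi lo hi i y -> utility W f c i (upd x i y) <= utility W f c i x.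

Definition pos_def (A : 'M[R]_n) : Prop :=
  forall v : 'cV[R]_n, v != 0 -> 0 < (v^T *m A *m v) ord0 ord0.

Definition min_eigenvalue (A : 'M[R]_n) (s : R) : Prop :=
  eigenvalue A s /\ forall a, eigenvalue A a -> s <= a.

Definition singular_value (A : 'M[R]_n) (s : R) : Prop :=
  0 <= s /\ eigenvalue (A^T *m A) (s ^+ 2).

Definition max_singular_value (A : 'M[R]_n) (s : R) : Prop :=
  singular_value A s /\ forall t, singular_value A t -> t <= s.

Definition Sigma_mx (W W0 : 'M[R]_n) (L C : 'I_n -> R) : 'M[R]_n :=
  \matrix_(i, j) (if i == j then 0
                  else 2 * L i * `|W i j| / C i + `|W0 i j - W i j|).

End NPG.

From HB Require Import structures.
From mathcomp Require Import all_boot all_order all_algebra.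
From mathcomp Require Import all_classical all_reals all_analysis.
From mathcomp.algebra_tactics Require Import ring lra.
Import Order.TTheory GRing.Theory Num.Theory.
Import numFieldNormedType.Exports.
Local Open Scope classical_set_scope.
Local Open Scope ring_scope.
Set Implicit Arguments. Unset Strict Implicit. Unset Printing Implicit Defensive.

(* If player i best-responds in two profiles x and y, the first-order
   (variational) conditions of both optimisations together with the
   C_i-concavity of f_i give (x_i - y_i) (k_i(x) - k_i(y)) <= 0.  Summed over
   the players this says (x - y)^T W (x - y) <= 0.  But W is coercive:
   v^T W v >= v^T W0 v - |v|^T Sigma |v| >= (sigma0 - smax) |v|^2, because the
   entries of Sigma dominate those of |W0 - W|.  Hence x = y.
   Existence is proved by bringing the players into equilibrium one at a
   time.  If the first m players best-respond while player m plays t, the same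
   coercivity argument, restricted to the first m players, shows that the gain
   of player m, and hence her best response, depends Lipschitz-continuously on
   t, whichever such partial equilibrium is chosen.  A fixed point of this
   best response on [lo_m, hi_m] (intermediate value theorem) puts player m
   in equilibrium as well. *)

Section QuadraticForms.
Variables (R : realFieldType) (n : nat).
Implicit Types (u v w a : 'I_n -> R) (A B M : 'M[R]_n).

Definition dotv u w := \sum_i u i * w i.
Definition sqnorm u := \sum_i u i ^+ 2.
Definition mxv A u := fun i => \sum_j A i j * u j.
Definition qform A u := dotv u (mxv A u).
Definition sumabs A := \sum_i \sum_j `|A i j|.

Lemma sumabs_ge0 A : 0 <= sumabs A.
Proof. by do 2 apply: sumr_ge0 => ? _. Qed.

Lemma sqnorm_ge0 u : 0 <= sqnorm u.
Proof. by apply: sumr_ge0 => i _; apply: sqr_ge0. Qed.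

Lemma sqr_le_sqnorm u i : u i ^+ 2 <= sqnorm u.
Proof. by rewrite /sqnorm (bigD1 i) //= lerDl sumr_ge0 // => j _; apply: sqr_ge0. Qed.

Lemma sqnorm_eq0 u : sqnorm u = 0 -> forall i, u i = 0.
Proof.
move=> u0 i; apply/eqP; rewrite -sqrf_eq0 eq_le sqr_ge0 andbT -u0.
exact: sqr_le_sqnorm.
Qed.

Lemma sqnorm_abs u : sqnorm (fun i => `|u i|) = sqnorm u.
Proof. by apply: eq_bigr => i _; rewrite real_normK ?num_real. Qed.

Lemma sqnormZ t u : sqnorm (fun i => t * u i) = t ^+ 2 * sqnorm u.
Proof. by rewrite /sqnorm mulr_sumr; apply: eq_bigr => i _; rewrite exprMn. Qed.

Lemma normrM_le_sqnorm u i j : `|u i| * `|u j| <= sqnorm u.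
Proof.
have := sqr_le_sqnorm u i; have := sqr_le_sqnorm u j.
rewrite -(real_normK (num_real (u i))) -(real_normK (num_real (u j))).
have := sqr_ge0 (`|u i| - `|u j|); nra.
Qed.

Lemma dotv_sumE u A w :
  dotv u (mxv A w) = \sum_i \sum_j u i * A i j * w j.
Proof.
by apply: eq_bigr => i _; rewrite mulr_sumr; apply: eq_bigr => j _; rewrite mulrA.
Qed.

Lemma dotv_mxvC A u w : A^T = A -> dotv u (mxv A w) = dotv w (mxv A u).
Proof.
move=> symA; rewrite !dotv_sumE exchange_big; apply: eq_bigr => i _.
by apply: eq_bigr => j _; rewrite -{1}symA mxE; ring.
Qed.

Lemma dotv_sqr_le a u : dotv a u ^+ 2 <= sqnorm a * sqnorm u.
Proof.
have lagrange : \sum_i \sum_j (a i * u j - a j * u i) ^+ 2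
    = sqnorm a * sqnorm u + sqnorm u * sqnorm a - 2 * dotv a u ^+ 2.
  rewrite expr2 !big_distrlr mulr_sumr -!big_split -sumrB /=.
  apply: eq_bigr => i _; rewrite mulr_sumr -!big_split -sumrB /=.
  by apply: eq_bigr => j _; ring.
have : 0 <= \sum_i \sum_j (a i * u j - a j * u i) ^+ 2.
  by do 2 apply: sumr_ge0 => ? _; apply: sqr_ge0.
rewrite lagrange mulrC; lra.
Qed.

Lemma dotv_le_sqnorm s u w :
  0 <= s -> sqnorm w <= s ^+ 2 * sqnorm u -> dotv u w <= s * sqnorm u.
Proof.
move=> s0 hw; have N0 := sqnorm_ge0 u.
have [uw0|uw_pos] := lerP (dotv u w) 0; first by apply: le_trans uw0 _; rewrite mulr_ge0.
have : dotv u w ^+ 2 <= (s * sqnorm u) ^+ 2.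
  apply: le_trans (dotv_sqr_le u w) _.
  by rewrite mulrC exprMn expr2 mulrA ler_wpM2r.
by rewrite ler_sqr // nnegrE ?mulr_ge0 // ltW.
Qed.

Lemma sqnorm_le_of_dotv g a v :
  0 <= g -> g * sqnorm v <= dotv a v -> g ^+ 2 * sqnorm v <= sqnorm a.
Proof.
move=> g0 hv; have N0 := sqnorm_ge0 v.
have [->|Npos] := eqVneq (sqnorm v) 0; first by rewrite mulr0 sqnorm_ge0.
have {Npos}Npos : 0 < sqnorm v by rewrite lt_def Npos.
rewrite -(ler_pM2r Npos) -mulrA -expr2 -exprMn.
apply: le_trans (dotv_sqr_le a v).
by rewrite ler_sqr ?nnegrE ?mulr_ge0 // (le_trans _ hv) ?mulr_ge0.
Qed.

Lemma qform_norm_le A u : `|qform A u| <= sumabs A * sqnorm u.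
Proof.
rewrite /qform dotv_sumE; apply: le_trans (ler_norm_sum _ _ _) _.
rewrite /sumabs mulr_suml; apply: ler_sum => i _.
apply: le_trans (ler_norm_sum _ _ _) _; rewrite mulr_suml; apply: ler_sum => j _.
rewrite !normrM mulrAC mulrC ler_wpM2l //; exact: normrM_le_sqnorm.
Qed.

Lemma qformD A u w t : A^T = A ->
  qform A (fun i => u i + t * w i)
  = qform A u + 2 * t * dotv u (mxv A w) + t ^+ 2 * qform A w.
Proof.
move=> symA; rewrite /qform; have dC := dotv_mxvC u w symA.
transitivity (dotv u (mxv A u) + t * dotv u (mxv A w) + t * dotv w (mxv A u)
              + t ^+ 2 * dotv w (mxv A w)); last by rewrite -dC; ring.
rewrite !dotv_sumE !mulr_sumr -!big_split; apply: eq_bigr => i _.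
by rewrite !mulr_sumr -!big_split; apply: eq_bigr => j _ /=; ring.
Qed.

Lemma mxv_mulmx A B u : mxv A (mxv B u) = mxv (A *m B) u.
Proof.
apply/funext => i; rewrite /mxv; under eq_bigr do rewrite mulr_sumr.
rewrite exchange_big; apply: eq_bigr => k _; rewrite mxE mulr_suml.
by apply: eq_bigr => j _; rewrite mulrA.
Qed.

Lemma mxv1 u : mxv 1%:M u = u.
Proof.
apply/funext => i; rewrite /mxv (bigD1 i) //= big1 ?addr0 ?mxE ?eqxx ?mul1r //.
by move=> j /negbTE ji; rewrite mxE eq_sym ji mul0r.
Qed.

Lemma sqnorm_mxv M u : sqnorm (mxv M u) = qform (M^T *m M) u.
Proof.
rewrite /qform dotv_sumE.
transitivity (\sum_k \sum_i \sum_j u i * (M k i * M k j) * u j).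
  apply: eq_bigr => k _; rewrite expr2 big_distrlr; apply: eq_bigr => i _.
  by apply: eq_bigr => j _ /=; ring.
rewrite exchange_big; apply: eq_bigr => i _ /=; rewrite exchange_big.
apply: eq_bigr => j _ /=; rewrite !mxE mulr_sumr mulr_suml.
by apply: eq_bigr => k _; rewrite mxE.
Qed.

Lemma qform_subI A m u : qform (A - m%:M) u = qform A u - m * sqnorm u.
Proof.
rewrite /qform !dotv_sumE /sqnorm mulr_sumr -sumrB; apply: eq_bigr => i _.
rewrite (bigD1 i) //= [X in _ = X - _](bigD1 i) //= !mxE eqxx mulr1n.
under eq_bigr => j ji do rewrite !mxE eq_sym (negbTE ji) mulr0n subr0.
ring.
Qed.

Lemma qformN A u : qform (- A) u = - qform A u.
Proof.
rewrite /qform !dotv_sumE -sumrN; apply: eq_bigr => i _; rewrite -sumrN.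
by apply: eq_bigr => j _; rewrite mxE; ring.
Qed.

Lemma qformB_le A B M u : (forall i j, `|A i j - B i j| <= M i j) ->
  qform A u - qform B u <= qform M (fun i => `|u i|).
Proof.
move=> AB; rewrite /qform !dotv_sumE -sumrB; apply: ler_sum => i _.
rewrite -sumrB; apply: ler_sum => j _.
rewrite -mulrBl -mulrBr; apply: le_trans (ler_norm _) _.
by rewrite !normrM ler_wpM2r // ler_wpM2l.
Qed.

End QuadraticForms.

Section Rayleigh.
Variables (R : realType) (n : nat).
Implicit Types (u : 'I_n -> R) (A B : 'M[R]_n).

Lemma eigenvalue_dim_gt0 A a : eigenvalue A a -> (0 < n)%N.
Proof.
case/eigenvalueP => v _; apply: contraNT; rewrite -eqn0Ngt => /eqP n0.
by apply/eqP/rowP => i; have := ltn_ord i; rewrite {2}n0.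
Qed.

Lemma sqnorm1_ge1 : (0 < n)%N -> 1 <= sqnorm (fun _ : 'I_n => 1 : R).
Proof.
by move=> n0; apply: le_trans (sqr_le_sqnorm _ (Ordinal n0)); rewrite expr1n.
Qed.

Lemma subI_unitmx A a : ~~ eigenvalue A a -> A - a%:M \in unitmx.
Proof.
move=> noev; rewrite unitmxE unitfE; apply: contra noev => /det0P [v v0 vA].
apply/eigenvalueP; exists v => //.
by apply/eqP; rewrite -subr_eq0 -mul_mx_scalar -mulmxBr vA.
Qed.

Lemma psd_unitmx_coercive B : B^T = B -> (forall u, 0 <= qform B u) ->
  B \in unitmx -> exists2 k, 0 < k & forall u, k * sqnorm u <= qform B u.
Proof.
move=> symB psd Bu; pose Bi := invmx B.
pose K := sumabs B * sumabs (Bi^T *m Bi) + 1.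
have K0 : 0 < K by rewrite ltr_pwDr // mulr_ge0 // sumabs_ge0.
exists K^-1; first by rewrite invr_gt0.
move=> u; pose w := mxv Bi u.
have Bw : dotv u (mxv B w) = sqnorm u.
  rewrite /w mxv_mulmx mulmxV // mxv1.
  by apply: eq_bigr => i _; rewrite expr2.
have qw : qform B w <= (K - 1) * sqnorm u.
  apply: le_trans (ler_norm _) _; apply: le_trans (qform_norm_le _ _) _.
  rewrite /K addrK -mulrA ler_wpM2l ?sumabs_ge0 // /w sqnorm_mxv.
  exact: le_trans (ler_norm _) (qform_norm_le _ _).
(* positivity of [qform B] at [u - K^-1 B^-1 u] *)
have := psd (fun i => u i + (- K^-1) * w i); rewrite qformD // Bw.
have N0 := sqnorm_ge0 u; have Ki0 : 0 < K^-1 by rewrite invr_gt0.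
have : K^-1 ^+ 2 * qform B w <= K^-1 * sqnorm u - K^-1 ^+ 2 * sqnorm u.
  have -> : K^-1 * sqnorm u - K^-1 ^+ 2 * sqnorm u = K^-1 ^+ 2 * ((K - 1) * sqnorm u).
    by field; rewrite gt_eqF.
  by rewrite ler_wpM2l ?sqr_ge0.
have : 0 <= K^-1 ^+ 2 * sqnorm u by rewrite mulr_ge0 ?sqr_ge0.
rewrite sqrrN; lra.
Qed.

Lemma sym_eigenvalue_qform_lb A : (0 < n)%N -> A^T = A ->
  exists m, eigenvalue A m /\ forall u, m * sqnorm u <= qform A u.
Proof.
move=> n0 symA.
pose E := [set r | exists2 u, 0 < sqnorm u & r = qform A u / sqnorm u].
have E0 : nonempty E.
  exists (qform A (fun=> 1) / sqnorm (fun _ : 'I_n => 1 : R)); exists (fun=> 1) => //.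
  exact: lt_le_trans (sqnorm1_ge1 n0).
have Elb : lbound E (- sumabs A).
  move=> _ [u u0 ->]; rewrite ler_pdivlMr // mulNr.
  exact: lerNnormlW (qform_norm_le A u).
pose m := inf E.
have m_lb u : m * sqnorm u <= qform A u.
  have [u0|u0] := eqVneq (sqnorm u) 0.
    have := qform_norm_le A u; rewrite u0 mulr0 normr_le0 => /eqP ->.
    by rewrite mulr0.
  rewrite -ler_pdivlMr ?lt_def ?u0 ?sqnorm_ge0 //; apply: ge_inf.
    by exists (- sumabs A).
  by exists u; rewrite // lt_def u0 sqnorm_ge0.
(* Otherwise A - m would be invertible and positive semidefinite, hence
   coercive, and m would not be the infimum of the Rayleigh quotient. *)
exists m; split => //; apply: contraT => noev.
have symB : (A - m%:M)^T = A - m%:M by rewrite linearB /= symA tr_scalar_mx.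
have psdB u : 0 <= qform (A - m%:M) u by rewrite qform_subI subr_ge0.
have [k k0 kB] := psd_unitmx_coercive symB psdB (subI_unitmx noev).
have : m + k <= inf E.
  apply: (lb_le_inf E0) => _ [u u0 ->]; rewrite ler_pdivlMr // mulrDl.
  by have := kB u; rewrite qform_subI lerBrDl.
by rewrite -/m gerDl leNgt k0.
Qed.

Lemma min_eigenvalue_qform_lb A s : A^T = A -> min_eigenvalue A s ->
  forall u, s * sqnorm u <= qform A u.
Proof.
move=> symA [evs s_min] u.
have [m [evm m_lb]] := sym_eigenvalue_qform_lb (eigenvalue_dim_gt0 evs) symA.
by apply: le_trans (m_lb u); rewrite ler_wpM2r ?sqnorm_ge0 ?s_min.
Qed.

Lemma max_singular_value_sqnorm_le A s : max_singular_value A s ->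
  forall u, sqnorm (mxv A u) <= s ^+ 2 * sqnorm u.
Proof.
move=> [[s0 evs] s_max] u; pose G := A^T *m A.
have symG : (- G)^T = - G by rewrite linearN /= /G trmx_mul trmxK.
have [m [evm m_lb]] := sym_eigenvalue_qform_lb (eigenvalue_dim_gt0 evs) symG.
have evG : eigenvalue G (- m).
  case/eigenvalueP: evm => v vG v0; apply/eigenvalueP; exists v => //.
  by rewrite scaleNr -vG mulmxN opprK.
have m_le0 : m <= 0.
  have := m_lb (fun=> 1); rewrite qformN -sqnorm_mxv.
  have := sqnorm1_ge1 (eigenvalue_dim_gt0 evs).
  have := sqnorm_ge0 (mxv A (fun=> 1)); nra.
have : Num.sqrt (- m) <= s.
  by apply: s_max; split; rewrite ?sqrtr_ge0 // sqr_sqrtr ?oppr_ge0.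
rewrite -(ler_sqr (x := Num.sqrt _)) ?nnegrE ?sqrtr_ge0 // sqr_sqrtr ?oppr_ge0 //.
move=> ms; have := m_lb u; rewrite qformN -sqnorm_mxv => mu.
have := sqnorm_ge0 u; nra.
Qed.

End Rayleigh.

Section NetworkCoercivity.
Variables (R : realType) (n : nat).
Variables (W W0 : 'M[R]_n) (L C : 'I_n -> R).

Lemma Sigma_mx_dominates : (forall i, W i i = 1) -> (forall i, W0 i i = 1) ->
  (forall i, 0 <= L i) -> (forall i, 0 < C i) ->
  forall i j, `|W0 i j - W i j| <= Sigma_mx W W0 L C i j.
Proof.
move=> W1 W01 L0 C0 i j; rewrite mxE; case: eqP => [<-|_].
  by rewrite W1 W01 subrr normr0.
by apply: ler_wpDl => //; apply: divr_ge0; [rewrite !mulr_ge0 | apply: ltW].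
Qed.

Lemma network_qform_lb s0 smax : (forall i, W i i = 1) -> W0^T = W0 ->
  min_eigenvalue W0 s0 -> (forall i, W0 i i = 1) -> (forall i, 0 <= L i) ->
  (forall i, 0 < C i) -> max_singular_value (Sigma_mx W W0 L C) smax ->
  forall v, (s0 - smax) * sqnorm v <= qform W v.
Proof.
move=> W1 symW0 minW0 W01 L0 C0 maxS v.
have W0_lb := min_eigenvalue_qform_lb symW0 minW0 v.
have S_ub : qform (Sigma_mx W W0 L C) (fun i => `|v i|) <= smax * sqnorm v.
  rewrite -(sqnorm_abs v); apply: dotv_le_sqnorm; first by case: maxS => -[].
  exact: max_singular_value_sqnorm_le.
have := qformB_le v (Sigma_mx_dominates W1 W01 L0 C0); lra.
Qed.

End NetworkCoercivity.

Lemma normr_le_sqrtM (R : rcfType) (a b K : R) : 0 <= K ->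
  a ^+ 2 <= K * b ^+ 2 -> `|a| <= Num.sqrt K * `|b|.
Proof. by move=> K0 ab; rewrite -!sqrtr_sqr -sqrtrM // ler_wsqrtr. Qed.

Section RealAnalysis.
Variable R : realType.
Implicit Types (A : set R) (g dg h : R -> R).

Lemma within_itv_continuous h a b :
  (forall x, x \in `[a, b] -> forall e, 0 < e -> exists2 r, 0 < r &
     forall y, y \in `[a, b] -> `|x - y| < r -> `|h x - h y| < e) ->
  {within `[a, b], continuous h}.
Proof.
move=> h_cont; apply/subspace_continuousP => x xab; apply/cvgrPdist_lt => e e0.
have [r r0 hr] := h_cont x xab e e0.
by rewrite /within /=; apply/nbhs_ballP; exists r => // y xy yab; apply: hr.
Qed.

Lemma lipschitz_within_itv_continuous h k a b :
  (forall x y, x \in `[a, b] -> y \in `[a, b] -> `|h x - h y| <= k * `|x - y|) ->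
  {within `[a, b], continuous h}.
Proof.
move=> h_lip; apply: within_itv_continuous => x xab e e0.
have k1 : 0 < `|k| + 1 by rewrite ltr_pwDr.
exists (e / (`|k| + 1)) => [|y yab xy]; first by rewrite divr_gt0.
apply: le_lt_trans (h_lip x y xab yab) _.
apply: le_lt_trans (_ : _ <= (`|k| + 1) * `|x - y|) _.
  by rewrite ler_wpM2r // (le_trans (ler_norm k)) // lerDl.
by rewrite mulrC -ltr_pdivlMr.
Qed.

Lemma itv_fixed_point h a b : a <= b -> {within `[a, b], continuous h} ->
  (forall t, t \in `[a, b] -> h t \in `[a, b]) ->
  exists2 t, t \in `[a, b] & h t = t.
Proof.
move=> ab h_cont h_maps.
have hB_cont : {within `[a, b], continuous (fun t => h t - t)}.
  move=> x; apply: cvgB; first exact: h_cont.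
  by apply: continuous_subspaceT => y; exact: cvg_id.
have [|t tab ht] := IVT (v := 0) ab hB_cont.
  have := h_maps a; have := h_maps b; rewrite !in_itv /= !lexx ab.
  move=> /(_ isT) /andP[_ hb] /(_ isT) /andP[ha _].
  by rewrite ge_min le_max !subr_le0 !subr_ge0 hb ha !orbT.
by exists t => //; apply/eqP; rewrite -subr_eq0 ht.
Qed.

Lemma deriv_on_quotient A g dg a : deriv_on A g dg -> A a ->
  forall e, 0 < e -> exists2 r, 0 < r & forall y, A y -> y != a ->
    `|a - y| < r -> `|dg a - (g y - g a) / (y - a)| < e.
Proof.
move=> g_deriv Aa e e0; have := g_deriv a Aa; move/cvgrPdist_lt => /(_ e e0).
rewrite /within /= => /nbhs_ballP [r r0 hr]; exists r => // y Ay ya ay.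
by apply: hr; rewrite /ball //=; split => //; apply/eqP.
Qed.

Lemma deriv_on_continuous A g dg a : deriv_on A g dg -> A a ->
  forall e, 0 < e -> exists2 r, 0 < r &
    forall y, A y -> `|a - y| < r -> `|g a - g y| < e.
Proof.
move=> g_deriv Aa e e0; have [r r0 hr] := deriv_on_quotient g_deriv Aa ltr01.
have k0 : 0 < `|dg a| + 1 by rewrite ltr_pwDr.
exists (Num.min r (e / (`|dg a| + 1))) => [|y Ay]; first by rewrite lt_min r0 divr_gt0.
rewrite lt_min => /andP[ay_r ay_e]; have [->|ya] := eqVneq y a.
  by rewrite subrr normr0.
have := hr y Ay ya ay_r; set q := (g y - g a) / (y - a) => hq.
have -> : g a - g y = - (q * (y - a)) by rewrite /q divfK ?subr_eq0 // opprB.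
have q_lt : `|q| < `|dg a| + 1.
  rewrite addrC -ltrBlDr; apply: le_lt_trans (lerB_dist _ _) _; rewrite distrC //.
rewrite normrN normrM distrC; apply: le_lt_trans (_ : _ <= (`|dg a| + 1) * `|a - y|) _.
  by rewrite ler_wpM2r // ltW.
by rewrite mulrC -ltr_pdivlMr.
Qed.

Lemma deriv_on_dir_le A g dg a v M : deriv_on A g dg -> A a ->
  (forall t, 0 < t <= 1 -> A (a + t * v) /\ g (a + t * v) - g a <= t * M) ->
  v * dg a <= M.
Proof.
move=> g_deriv Aa; have [->|v0] := eqVneq v 0 => vM.
  by case: (vM 1) => [|_]; rewrite ?ltr01 ?lexx // !mulr0 addr0 subrr mul1r mul0r.
have nv0 : 0 < `|v| by rewrite normr_gt0.
apply/ler_addgt0Pr => e e0.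
have [r r0 hr] := deriv_on_quotient g_deriv Aa (divr_gt0 e0 nv0).
pose t := Num.min 1 (r / (2 * `|v|)).
have t0 : 0 < t by rewrite lt_min ltr01 divr_gt0 ?mulr_gt0.
have [At gt] : A (a + t * v) /\ g (a + t * v) - g a <= t * M.
  by apply: vM; rewrite t0 ge_min lexx.
have tv_r : `|a - (a + t * v)| < r.
  rewrite opprD addNKr normrN normrM gtr0_norm // -ltr_pdivlMr //.
  apply: le_lt_trans (_ : t <= r / (2 * `|v|)) _; first by rewrite ge_min lexx orbT.
  rewrite ltr_pM2l ?ltr_pdivrMr ?mulr_gt0 //.
  rewrite ltf_pV2 ?posrE ?mulr_gt0 // ltr_pMl //; lra.
have tv0 : t * v != 0 by rewrite mulf_neq0 // gt_eqF.
have shift : a + t * v - a = t * v by rewrite addrC addKr.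
have := hr _ At; rewrite -subr_eq0 shift => /(_ tv0 tv_r).
set q := (g (a + t * v) - g a) / (t * v) => hq.
have qv : q * v <= M by rewrite -(ler_pM2l t0) mulrCA divfK.
have : v * (dg a - q) <= e.
  apply: le_trans (ler_norm _) _.
  by rewrite normrM mulrC -ler_pdivlMr // ltW.
lra.
Qed.

Lemma C_concave_on_strong_monotone C A g dg a b : C_concave_on C A g dg -> A a -> A b ->
  (dg a - dg b) * (a - b) <= - C * (a - b) ^+ 2.
Proof. move=> g_conc Aa Ab; have := g_conc _ _ Aa Ab; have := g_conc _ _ Ab Aa; nra. Qed.

End RealAnalysis.

Section Game.
Variables (R : realType) (n : nat) (W : 'M[R]_n) (lo hi : 'I_n -> R).
Variables (f df c dc : 'I_n -> R -> R) (C : 'I_n -> R).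
Hypothesis W_diag : forall i, W i i = 1.
Hypothesis lo_le_hi : forall i, lo i <= hi i.
Hypothesis df_deriv : forall i, deriv_on (Ki W lo hi i) (f i) (df i).
Hypothesis dc_deriv : forall i, deriv_on (Xi lo hi i) (c i) (dc i).
Hypothesis c_convex : forall i, convex_on (Xi lo hi i) (c i).
Hypothesis C_gt0 : forall i, 0 < C i.
Hypothesis f_C_concave : forall i, C_concave_on (C i) (Ki W lo hi i) (f i) (df i).
Implicit Types (x y p : 'I_n -> R) (i j k : 'I_n) (s t : R).

Definition best_response i x :=
  forall t, Xi lo hi i t -> utility W f c i (upd x i t) <= utility W f c i x.

Definition others_gain i x := gain W i x - x i.

Lemma upd_eq x i t : upd x i t i = t.
Proof. by rewrite /upd eqxx. Qed.

Lemma upd_neq x i t j : j != i -> upd x i t j = x j.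
Proof. by rewrite /upd => /negbTE ->. Qed.

Lemma upd_id x i t : x i = t -> upd x i t = x.
Proof. by move=> <-; apply/funext => j; rewrite /upd; case: eqP => // ->. Qed.

Lemma upd_upd x i s t : upd (upd x i s) i t = upd x i t.
Proof. by apply/funext => j; rewrite /upd; case: eqP. Qed.

Lemma inX_upd x i t : inX lo hi x -> Xi lo hi i t -> inX lo hi (upd x i t).
Proof. by move=> xX tX j; rewrite /upd; case: eqP => [->|]. Qed.

Lemma Xi_itv i t : Xi lo hi i t <-> t \in `[lo i, hi i].
Proof. by rewrite in_itv /=; split => [[-> ->]|/andP[]]. Qed.

Lemma Xi_segment i s t r : Xi lo hi i s -> Xi lo hi i t -> 0 <= r <= 1 ->
  Xi lo hi i (s + r * (t - s)).
Proof. by move=> [s1 s2] [t1 t2] /andP[r0 r1]; split; nra. Qed.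

Lemma gain_in_Ki x i : inX lo hi x -> Ki W lo hi i (gain W i x).
Proof. by exists x. Qed.

Lemma gain_upd x i t : gain W i (upd x i t) = others_gain i x + t.
Proof.
rewrite /others_gain /gain (bigD1 i) //= [in RHS](bigD1 i) //= upd_eq W_diag.
under eq_bigr => j ji do rewrite upd_neq //.
ring.
Qed.

Lemma utility_upd x i t :
  utility W f c i (upd x i t) = f i (others_gain i x + t) - c i t.
Proof. by rewrite /utility gain_upd upd_eq. Qed.

Lemma gainB x y i : gain W i x - gain W i y = mxv W (fun j => x j - y j) i.
Proof. by rewrite /gain /mxv -sumrB; apply: eq_bigr => j _; rewrite mulrBr. Qed.

Lemma best_response_variational x i t : inX lo hi x -> best_response i x ->
  Xi lo hi i t -> (t - x i) * df i (gain W i x) <= c i t - c i (x i).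
Proof.
move=> xX xbr tX.
apply: (deriv_on_dir_le (@df_deriv i) (gain_in_Ki i xX)) => r /andP[r0 r1].
set z := x i + r * (t - x i).
have zX : Xi lo hi i z by apply: Xi_segment (xX i) tX _; rewrite (ltW r0).
have gz : gain W i (upd x i z) = gain W i x + r * (t - x i).
  by rewrite gain_upd /z /others_gain; ring.
split; first by rewrite -gz; apply/gain_in_Ki/inX_upd.
have := xbr z zX; rewrite /utility gz upd_eq.
have := c_convex tX (xX i) (ltW r0) r1.
have -> : r * t + (1 - r) * x i = z by rewrite /z; ring.
lra.
Qed.

Lemma best_response_monotone x y i : inX lo hi x -> inX lo hi y ->
  best_response i x -> best_response i y ->
  (x i - y i) * (gain W i x - gain W i y) <= 0.
Proof.
move=> xX yX xbr ybr.
have [->|ab] := eqVneq (gain W i x) (gain W i y); first by rewrite subrr mulr0.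
have vx := best_response_variational xX xbr (yX i).
have vy := best_response_variational yX ybr (xX i).
have := C_concave_on_strong_monotone (@f_C_concave i) (gain_in_Ki i xX) (gain_in_Ki i yX).
set a := gain W i x in ab vx *; set b := gain W i y in ab vy *.
have ab2 : 0 < (a - b) ^+ 2 by rewrite lt_def sqr_ge0 andbT sqrf_eq0 subr_eq0.
move=> mono; have neg : (df i a - df i b) * (a - b) < 0.
  by apply: le_lt_trans mono _; rewrite mulNr oppr_lt0 mulr_gt0.
rewrite -(nmulr_lge0 _ neg).
have -> : (x i - y i) * (a - b) * ((df i a - df i b) * (a - b))
  = ((x i - y i) * (df i a - df i b)) * (a - b) ^+ 2 by ring.
apply: mulr_ge0 (ltW ab2); nra.
Qed.

Lemma others_gain_in_Ki x i t : inX lo hi x -> Xi lo hi i t ->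
  Ki W lo hi i (others_gain i x + t).
Proof. by move=> xX tX; rewrite -gain_upd; apply/gain_in_Ki/inX_upd. Qed.

Lemma best_response_exists x i : inX lo hi x ->
  exists2 t, Xi lo hi i t & best_response i (upd x i t).
Proof.
move=> xX; set o := others_gain i x.
have u_cont : {within `[lo i, hi i], continuous (fun t => f i (o + t) - c i t)}.
  apply: within_itv_continuous => t /Xi_itv tX e e0.
  have e2 : 0 < e / 2 by rewrite divr_gt0.
  have [r1 r1_0 f_near] :=
    deriv_on_continuous (@df_deriv i) (others_gain_in_Ki xX tX) e2.
  have [r2 r2_0 c_near] := deriv_on_continuous (@dc_deriv i) tX e2.
  exists (Num.min r1 r2) => [|s /Xi_itv sX]; first by rewrite lt_min r1_0 r2_0.
  rewrite lt_min => /andP[ts1 ts2].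
  have os : o + t - (o + s) = t - s by rewrite opprD addrACA subrr add0r.
  have := f_near _ (others_gain_in_Ki xX sX); rewrite os => /(_ ts1).
  have := c_near _ sX ts2.
  have -> : f i (o + t) - c i t - (f i (o + s) - c i s)
    = (f i (o + t) - f i (o + s)) - (c i t - c i s) by ring.
  have := ler_normB (f i (o + t) - f i (o + s)) (c i t - c i s); lra.
have [t /Xi_itv tX t_max] := EVT_max (lo_le_hi i) u_cont.
exists t => // s sX; rewrite upd_upd !utility_upd.
by apply: t_max; apply/Xi_itv.
Qed.

Lemma best_response_lipschitz x y i s t : inX lo hi x -> inX lo hi y ->
  Xi lo hi i s -> Xi lo hi i t ->
  best_response i (upd x i s) -> best_response i (upd y i t) ->
  `|s - t| <= `|others_gain i x - others_gain i y|.
Proof.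
move=> xX yX sX tX sbr tbr.
have := best_response_monotone (inX_upd xX sX) (inX_upd yX tX) sbr tbr.
rewrite !upd_eq !gain_upd => mono.
rewrite -sqrtr_sqr -[leRHS]sqrtr_sqr ler_wsqrtr //.
have := sqr_ge0 (s - t + (others_gain i x - others_gain i y)); nra.
Qed.

Variable g : R.
Hypothesis g_gt0 : 0 < g.
Hypothesis W_coercive : forall v, g * sqnorm v <= qform W v.

Lemma best_responses_unique x y : inX lo hi x -> inX lo hi y ->
  (forall i, best_response i x) -> (forall i, best_response i y) -> x = y.
Proof.
move=> xX yX xbr ybr; pose d j := x j - y j.
have qd : qform W d <= 0.
  by apply: sumr_le0 => i _; rewrite -gainB; apply: best_response_monotone.
have d0 : sqnorm d = 0.
  apply/eqP; rewrite eq_le sqnorm_ge0 andbT -(pmulr_rle0 _ g_gt0).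
  exact: le_trans (W_coercive d) qd.
by apply/funext => j; apply/eqP; rewrite -subr_eq0; apply/eqP; apply: sqnorm_eq0 d0 j.
Qed.

Definition restrict_lt k x : 'I_n -> R := fun j => if (j < k)%N then x j else 0.

Lemma others_gain_lipschitz k : exists2 K, 0 <= K & forall x y,
  inX lo hi x -> inX lo hi y ->
  (forall i, (i < k)%N -> best_response i x /\ best_response i y) ->
  (forall j, (k < j)%N -> x j = y j) ->
  `|others_gain k x - others_gain k y| <= K * `|x k - y k|.
Proof.
pose row j := W k j; pose col i := W i k.
exists (Num.sqrt (sqnorm row * sqnorm col / g ^+ 2)) => [|x y xX yX br agree].
  exact: sqrtr_ge0.
apply: normr_le_sqrtM; first by rewrite !mulr_ge0 ?sqnorm_ge0 ?invr_ge0 ?sqr_ge0.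
set tau := x k - y k; set v := restrict_lt k (fun j => x j - y j).
have d_split j : x j - y j = v j + (if j == k then tau else 0).
  rewrite /v /restrict_lt; case: ltngtP => [jk|kj|/val_inj ->].
  - by rewrite ifF ?addr0 //; apply: contraTF jk => /eqP ->; rewrite ltnn.
  - by rewrite ifF ?agree ?subrr ?addr0 //; apply: contraTF kj => /eqP ->; rewrite ltnn.
  - by rewrite eqxx add0r.
have mxv_split i : mxv W (fun j => x j - y j) i = mxv W v i + W i k * tau.
  rewrite /mxv; under eq_bigr do rewrite d_split mulrDr.
  rewrite big_split /=; congr (_ + _).
  by rewrite (bigD1 k) //= eqxx big1 ?addr0 // => j /negbTE ->; rewrite mulr0.
have dev : others_gain k x - others_gain k y = dotv row v.
  have -> : others_gain k x - others_gain k y = gain W k x - gain W k y - tau.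
    by rewrite /others_gain /tau; ring.
  by rewrite gainB mxv_split W_diag mul1r addrK.
(* monotonicity of the best responses of the players i < k *)
have qv : g * sqnorm v <= dotv (fun i => - tau * col i) v.
  apply: le_trans (W_coercive v) _; apply: ler_sum => i _.
  rewrite {1 3}/v /restrict_lt; case: ltnP => ik; last by rewrite !mul0r mulr0.
  have := best_response_monotone xX yX (br i ik).1 (br i ik).2.
  rewrite gainB mxv_split /col; nra.
have := sqnorm_le_of_dotv (ltW g_gt0) qv; rewrite sqnormZ sqrrN => v_le.
rewrite dev; apply: le_trans (dotv_sqr_le row v) _.
rewrite -!mulrA ler_wpM2l ?sqnorm_ge0 // mulrA mulrAC ler_pdivlMr ?exprn_gt0 //.
by rewrite mulrC [_ * tau ^+ 2]mulrC.
Qed.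

Definition partial_eq (m : nat) p x := [/\ inX lo hi x,
  forall j, (m <= j)%N -> x j = p j & forall i, (i < m)%N -> best_response i x].

Lemma partial_eq_response k :
  (forall p, inX lo hi p -> exists x, partial_eq k p x) ->
  forall p, inX lo hi p -> exists sel : R -> ('I_n -> R) * R,
  forall t, Xi lo hi k t -> [/\ partial_eq k (upd p k t) (sel t).1,
    Xi lo hi k (sel t).2 & best_response k (upd (sel t).1 k (sel t).2)].
Proof.
move=> IH p pX.
have /choice [sel sel_spec] : forall t, exists xs : ('I_n -> R) * R,
    Xi lo hi k t -> [/\ partial_eq k (upd p k t) xs.1, Xi lo hi k xs.2
                       & best_response k (upd xs.1 k xs.2)].
  move=> t; have [tX|ntX] := pselect (Xi lo hi k t); last by exists (p, 0) => /ntX.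
  have [x [xX xp xbr]] := IH _ (inX_upd pX tX).
  have [s sX sbr] := best_response_exists k xX.
  by exists (x, s).
by exists sel.
Qed.

Lemma partial_eq_succ m : (m < n)%N ->
  (forall p, inX lo hi p -> exists x, partial_eq m p x) ->
  forall p, inX lo hi p -> exists x, partial_eq m.+1 p x.
Proof.
move=> mn IH p pX; pose k := Ordinal mn.
have [sel sel_spec] := partial_eq_response (k := k) IH pX.
have sel_k t : Xi lo hi k t -> (sel t).1 k = t.
  by case/sel_spec => -[_ xp _] _ _; rewrite xp ?upd_eq.
have sel_agree t j : Xi lo hi k t -> (k < j)%N -> (sel t).1 j = p j.
  case/sel_spec => -[_ xp _] _ _ kj; rewrite xp ?upd_neq ?(ltnW kj) //.
  by apply: contraTneq kj => ->; rewrite ltnn.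
pose br t := (sel t).2.
have [K _ o_lip] := others_gain_lipschitz k.
have br_lip t t' : t \in `[lo k, hi k] -> t' \in `[lo k, hi k] ->
    `|br t - br t'| <= K * `|t - t'|.
  move=> /Xi_itv tX /Xi_itv t'X.
  have [[xX _ xbr] sX sbr] := sel_spec t tX.
  have [[x'X _ x'br] s'X s'br] := sel_spec t' t'X.
  apply: le_trans (best_response_lipschitz xX x'X sX s'X sbr s'br) _.
  rewrite -{2}(sel_k t tX) -{2}(sel_k t' t'X); apply: o_lip => // [i ik|j kj].
    by split; [apply: xbr | apply: x'br].
  by rewrite !sel_agree.
have br_maps t : t \in `[lo k, hi k] -> br t \in `[lo k, hi k].
  by move=> /Xi_itv /sel_spec [_ sX _]; apply/Xi_itv.
have [t /Xi_itv tX brt] := itv_fixed_point (lo_le_hi k)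
  (lipschitz_within_itv_continuous br_lip) br_maps.
have [[xX _ xbr] _ sbr] := sel_spec t tX.
exists (sel t).1; split => // [j|i]; first exact: sel_agree.
rewrite ltnS leq_eqVlt => /orP[/eqP im|]; last exact: xbr.
have -> : i = k by apply: val_inj.
by move: sbr; rewrite -/(br t) brt upd_id ?sel_k.
Qed.

Lemma partial_eq_exists m : (m <= n)%N ->
  forall p, inX lo hi p -> exists x, partial_eq m p x.
Proof.
elim: m => [_ p pX|m IH mn]; first by exists p; split.
exact: partial_eq_succ mn (IH (ltnW mn)).
Qed.

Lemma nash_eq_exists_unique :
  exists x, nash_eq W lo hi f c x /\ forall y, nash_eq W lo hi f c y -> y = x.
Proof.
have loX : inX lo hi lo by move=> i; split; [exact: lexx | exact: lo_le_hi].
have [x [xX _ xbr]] := partial_eq_exists (leqnn n) loX.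
exists x; split => [|y [yX ybr]]; first by split=> // i; apply: xbr.
by apply: best_responses_unique => // i; apply: xbr.
Qed.

End Game.

Unset Implicit Arguments. Set Strict Implicit.

Theorem theorem3p8 (R : realType) (n : nat)
  (W : 'M[R]_n) (lo hi : 'I_n -> R)
  (f df ddf c dc ddc : 'I_n -> R -> R)
  (W0 : 'M[R]_n) (L C : 'I_n -> R) (sigma0 smax : R) :
  (forall i, W i i = 1) ->
  (forall i, lo i <= hi i) ->
  (* f_i twice differentiable, concave, strictly increasing on K_i *)
  (forall i, deriv_on (Ki W lo hi i) (f i) (df i)) ->
  (forall i, deriv_on (Ki W lo hi i) (df i) (ddf i)) ->
  (forall i, concave_on (Ki W lo hi i) (f i)) ->
  (forall i, strictly_increasing_on (Ki W lo hi i) (f i)) ->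
  (* c_i twice differentiable, convex, strictly increasing on X_i *)
  (forall i, deriv_on (Xi lo hi i) (c i) (dc i)) ->
  (forall i, deriv_on (Xi lo hi i) (dc i) (ddc i)) ->
  (forall i, convex_on (Xi lo hi i) (c i)) ->
  (forall i, strictly_increasing_on (Xi lo hi i) (c i)) ->
  (* (1) *)
  W0^T = W0 -> pos_def W0 -> min_eigenvalue W0 sigma0 -> 0 < sigma0 ->
  (forall i, W0 i i = 1) ->
  (* (2), (3) *)
  (forall i, 0 <= L i) -> (forall i, 0 < C i) ->
  (forall i, Lipschitz_const_on (L i) (Xi lo hi i) (dc i)) ->
  (forall i, C_concave_on (C i) (Ki W lo hi i) (f i) (df i)) ->
  (* (4) *)
  max_singular_value (Sigma_mx W W0 L C) smax -> smax < sigma0 ->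
  exists x, nash_eq W lo hi f c x /\
    forall y, nash_eq W lo hi f c y -> y = x.
Proof.
(* Unused: the second derivatives, the monotonicity of f_i and c_i, the
   concavity of f_i (implied by (3)), pos_def W0 and 0 < sigma0 (both follow
   from 0 <= smax < sigma0), and the Lipschitz bound (2): L only enters
   through Sigma. *)
move=> W_diag lo_le_hi df_deriv _ _ _ dc_deriv _ c_convex _ symW0 _ minW0 _
  W0_diag L_ge0 C_gt0 _ f_C_concave maxS smax_lt.
have W_coercive := network_qform_lb W_diag symW0 minW0 W0_diag L_ge0 C_gt0 maxS.
have g_gt0 : 0 < sigma0 - smax by rewrite subr_gt0.
exact: (nash_eq_exists_unique W_diag lo_le_hi df_deriv dc_deriv c_convex C_gt0
  f_C_concave g_gt0 W_coercive).
Qed.
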